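(* Let $0<q<1$ and $m,n\in\mathbb N_0$. Then the Rodrigues-type formula $$H_{m,n}(z_1,z_2|q)=\frac{(1-1/q)^{m+n}q^{mn}}{(qz_1z_2;q)_\infty}\,D_{q^{-1},z_2}^m D_{q^{-1},z_1}^n\big((qz_1z_2;q)_\infty\big)$$ holds, and consequently the raising relations $$H_{m+1,n}(z_1,z_2|q)=q^n\frac{1-1/q}{(qz_1z_2;q)_\infty}D_{q^{-1},z_2}\Big((qz_1z_2;q)_\infty H_{m,n}(z_1,z_2|q)\Big),$$ $$H_{m,n+1}(z_1,z_2|q)=q^m\frac{1-1/q}{(qz_1z_2;q)_\infty}D_{q^{-1},z_1}\Big((qz_1z_2;q)_\infty H_{m,n}(z_1,z_2|q)\Big)$$ hold.
   Context: Let $0<q<1$. $(a;q)_n=\prod_{j=0}^{n-1}(1-aq^j)$, $(a;q)_\infty=\prod_{j\ge0}(1-aq^j)$, $\left[{m\atop k}\right]_q=\frac{(q;q)_m}{(q;q)_k(q;q)_{m-k}}$, $m\wedge n=\min\{m,n\}$. For $p\in\{q,q^{-1}\}$ the operator $D_{p,z}$ acts on functions of $z$ by $(D_{p,z}f)(z)=\frac{f(z)-f(pz)}{(1-p)z}$. The first $q$-$2D$-Hermite polynomials are $$H_{m,n}(z_1,z_2|q)=\sum_{k=0}^{m\wedge n}\left[{m\atop k}\right]_q\left[{n\atop k}\right]_q(-1)^kq^{\binom k2}(q;q)_k\,z_1^{m-k}z_2^{n-k}.$$ *)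

From Stdlib Require Import Reals ClassicalEpsilon.
Open Scope R_scope.

Definition Cx : Type := (R * R)%type.
Definition RtoC (x : R) : Cx := (x, 0).
Definition C0 : Cx := (0, 0).
Definition C1 : Cx := (1, 0).
Definition Cadd (z w : Cx) : Cx := (fst z + fst w, snd z + snd w).
Definition Copp (z : Cx) : Cx := (- fst z, - snd z).
Definition Csub (z w : Cx) : Cx := Cadd z (Copp w).
Definition Cmul (z w : Cx) : Cx :=
  (fst z * fst w - snd z * snd w, fst z * snd w + snd z * fst w).
Definition Cinv (z : Cx) : Cx :=
  let d := fst z * fst z + snd z * snd z in (fst z / d, - snd z / d).
Definition Cdiv (z w : Cx) : Cx := Cmul z (Cinv w).
Fixpoint Cpow (z : Cx) (n : nat) : Cx :=
  match n with O => C1 | S k => Cmul z (Cpow z k) end.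
Fixpoint Csum (f : nat -> Cx) (n : nat) : Cx :=
  match n with O => f O | S k => Cadd (Csum f k) (f (S k)) end.

Definition Ccv (u : nat -> Cx) (l : Cx) : Prop :=
  Un_cv (fun n => fst (u n)) (fst l) /\ Un_cv (fun n => snd (u n)) (snd l).

Fixpoint qpoch (a : Cx) (q : R) (n : nat) : Cx :=
  match n with
  | O => C1
  | S k => Cmul (qpoch a q k) (Csub C1 (Cmul a (RtoC (q ^ k))))
  end.

(** (a;q)_oo := lim_n (a;q)_n  (chosen by classical description; it
    exists for 0<q<1, and the junk value C0 is never used then). *)
Definition qpoch_inf (a : Cx) (q : R) : Cx :=
  epsilon (inhabits C0) (fun l => Ccv (fun n => qpoch a q n) l).

Fixpoint qpochR (a q : R) (n : nat) : R :=
  match n with O => 1 | S k => qpochR a q k * (1 - a * q ^ k) end.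
Definition qbinom (q : R) (m k : nat) : R :=
  qpochR q q m / (qpochR q q k * qpochR q q (m - k)).

Definition binom2 (k : nat) : nat := (k * (k - 1) / 2)%nat.

Definition H2 (m n : nat) (z1 z2 : Cx) (q : R) : Cx :=
  Csum (fun k =>
    Cmul (RtoC (qbinom q m k * qbinom q n k * (-1) ^ k * q ^ (binom2 k)
                * qpochR q q k))
         (Cmul (Cpow z1 (m - k)) (Cpow z2 (n - k))))
    (Nat.min m n).

Definition Dq (p : R) (f : Cx -> Cx) (z : Cx) : Cx :=
  Cdiv (Csub (f z) (f (Cmul (RtoC p) z))) (Cmul (RtoC (1 - p)) z).
Definition Dq1 (p : R) (F : Cx -> Cx -> Cx) : Cx -> Cx -> Cx :=
  fun z1 z2 => Dq p (fun w => F w z2) z1.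
Definition Dq2 (p : R) (F : Cx -> Cx -> Cx) : Cx -> Cx -> Cx :=
  fun z1 z2 => Dq p (fun w => F z1 w) z2.

Definition Wq (q : R) (z1 z2 : Cx) : Cx :=
  qpoch_inf (Cmul (RtoC q) (Cmul z1 z2)) q.

From Stdlib Require Import Reals Lra Lia Field ClassicalEpsilon.
Open Scope R_scope.

(* The partial products (x;q)_n converge because their increments are O(q^n), and the limit
   satisfies (x;q)_oo = (1 - x) (qx;q)_oo.  For W(z1,z2) = (q z1 z2;q)_oo this says that
   replacing z2 by z2/q multiplies W by 1 - z1 z2, so that
     D_{1/q,z2} (W F) = W (F(z1,z2) - (1 - z1 z2) F(z1,z2/q)) / ((1 - 1/q) z2).
   A q-Pascal rule for the coefficients of H_{m,n} gives
     z2 H_{m+1,n}(z1,z2) = q^n (H_{m,n}(z1,z2) - (1 - z1 z2) H_{m,n}(z1,z2/q)),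
   which is the first raising relation; the symmetry H_{m,n}(z1,z2) = H_{n,m}(z2,z1) gives the
   second, and iterating both from H_{0,0} = 1 gives the Rodrigues formula. *)

Lemma Cring_theory : ring_theory C0 C1 Cadd Cmul Csub Copp (@eq Cx).
Proof.
  constructor; intros; repeat match goal with x : Cx |- _ => destruct x end;
    unfold Csub, C0, C1, Cadd, Cmul, Copp; simpl; f_equal; ring.
Qed.

Lemma Cfield_theory : field_theory C0 C1 Cadd Cmul Csub Copp Cdiv Cinv (@eq Cx).
Proof.
  constructor.
  - exact Cring_theory.
  - unfold C1, C0; intro H; injection H; lra.
  - reflexivity.
  - intros [a b] Hz.
    assert (Hd : a * a + b * b <> 0).
    { intro Hd; apply Hz.
      assert (a = 0) by nra; assert (b = 0) by nra; subst; reflexivity. }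
    unfold Cinv, Cmul, C1; simpl; f_equal; field; exact Hd.
Qed.

Add Field Cfield : Cfield_theory.

Lemma RtoC_0 : RtoC 0 = C0.
Proof. reflexivity. Qed.

Lemma RtoC_1 : RtoC 1 = C1.
Proof. reflexivity. Qed.

Lemma RtoC_add a b : RtoC (a + b) = Cadd (RtoC a) (RtoC b).
Proof. unfold RtoC, Cadd; simpl; f_equal; ring. Qed.

Lemma RtoC_sub a b : RtoC (a - b) = Csub (RtoC a) (RtoC b).
Proof. unfold RtoC, Csub, Cadd, Copp; simpl; f_equal; ring. Qed.

Lemma RtoC_mul a b : RtoC (a * b) = Cmul (RtoC a) (RtoC b).
Proof. unfold RtoC, Cmul; simpl; f_equal; ring. Qed.

Lemma RtoC_inv a : a <> 0 -> RtoC (/ a) = Cinv (RtoC a).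
Proof. intro Ha; unfold RtoC, Cinv; simpl; f_equal; field; exact Ha. Qed.

Lemma RtoC_neq0 a : a <> 0 -> RtoC a <> C0.
Proof. intros Ha E; apply Ha; injection E; auto. Qed.

Lemma Cpow_mul z w n : Cpow (Cmul z w) n = Cmul (Cpow z n) (Cpow w n).
Proof. induction n as [|n IH]; simpl; [ring|rewrite IH; ring]. Qed.

Lemma Cpow_RtoC a n : Cpow (RtoC a) n = RtoC (a ^ n).
Proof. induction n as [|n IH]; simpl; [reflexivity|]; rewrite IH, RtoC_mul; reflexivity. Qed.

Lemma Un_cv_const c : Un_cv (fun _ => c) c.
Proof. intros eps Heps; exists O; intros; unfold R_dist; rewrite Rminus_diag, Rabs_R0; exact Heps. Qed.

Lemma sum_f_R0_telescope (u : nat -> R) N :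
  sum_f_R0 (fun i => u (S i) - u i) N = u (S N) - u O.
Proof. induction N as [|N IH]; simpl; [reflexivity|]; rewrite IH; ring. Qed.

(* The increments form an absolutely convergent series. *)
Lemma Un_cv_of_geometric_increments (u : nat -> R) (C r : R) : 0 <= r < 1 ->
  (forall n, Rabs (u (S n) - u n) <= C * r ^ n) -> exists l, Un_cv u l.
Proof.
  intros Hr Hu.
  assert (Hgeom : {l | Un_cv (fun N => sum_f_R0 (fun n => C * r ^ n) N) l}).
  { exists (C * / (1 - r)).
    apply (Un_cv_ext (fun N => C * sum_f_R0 (fun n => 1 * r ^ n) N)).
    - intro N; induction N as [|N IH]; simpl; [ring|rewrite <- IH; ring].
    - apply CV_mult; [apply Un_cv_const|].
      apply GP_infinite; rewrite Rabs_pos_eq; lra. }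
  assert (Habs := Rseries_CV_comp (fun n => Rabs (u (S n) - u n)) _
                    (fun n => conj (Rabs_pos _) (Hu n)) Hgeom).
  destruct (cv_cauchy_2 _ (cauchy_abs _ (cv_cauchy_1 _ Habs))) as [l Hl].
  exists (l + u O).
  apply (CV_shift _ 1).
  apply (Un_cv_ext (fun N => sum_f_R0 (fun i => u (S i) - u i) N + u O)).
  - intro N; rewrite sum_f_R0_telescope, Nat.add_1_r; ring.
  - apply CV_plus; [exact Hl | apply Un_cv_const].
Qed.

Definition Cnorm1 (z : Cx) : R := Rabs (fst z) + Rabs (snd z).

Lemma Cnorm1_ge0 z : 0 <= Cnorm1 z.
Proof. unfold Cnorm1; pose proof (Rabs_pos (fst z)); pose proof (Rabs_pos (snd z)); lra. Qed.

Lemma Cnorm1_add z w : Cnorm1 (Cadd z w) <= Cnorm1 z + Cnorm1 w.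
Proof.
  unfold Cnorm1, Cadd; simpl.
  pose proof (Rabs_triang (fst z) (fst w)); pose proof (Rabs_triang (snd z) (snd w)); lra.
Qed.

Lemma Cnorm1_mul z w : Cnorm1 (Cmul z w) <= Cnorm1 z * Cnorm1 w.
Proof.
  destruct z as [a b], w as [c d]; unfold Cnorm1, Cmul; simpl.
  pose proof (Rabs_triang (a * c) (- (b * d))); pose proof (Rabs_triang (a * d) (b * c)).
  rewrite Rabs_Ropp, !Rabs_mult in *.
  pose proof (Rabs_pos a); pose proof (Rabs_pos b); pose proof (Rabs_pos c); pose proof (Rabs_pos d).
  unfold Rminus; nra.
Qed.

Lemma Cnorm1_opp z : Cnorm1 (Copp z) = Cnorm1 z.
Proof. unfold Cnorm1, Copp; simpl; rewrite !Rabs_Ropp; reflexivity. Qed.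

Lemma Cnorm1_RtoC a : Cnorm1 (RtoC a) = Rabs a.
Proof. unfold Cnorm1, RtoC; simpl; rewrite Rabs_R0; ring. Qed.

Lemma Rabs_fst_le_Cnorm1 z : Rabs (fst z) <= Cnorm1 z.
Proof. unfold Cnorm1; pose proof (Rabs_pos (snd z)); lra. Qed.

Lemma Rabs_snd_le_Cnorm1 z : Rabs (snd z) <= Cnorm1 z.
Proof. unfold Cnorm1; pose proof (Rabs_pos (fst z)); lra. Qed.

Lemma Ccv_unique u l1 l2 : Ccv u l1 -> Ccv u l2 -> l1 = l2.
Proof.
  intros [H1 H2] [H3 H4]; destruct l1, l2; simpl in *.
  f_equal; eapply UL_sequence; eassumption.
Qed.

Lemma Ccv_shift u l : Ccv u l -> Ccv (fun n => u (S n)) l.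
Proof.
  intros [H1 H2]; split;
    [apply (CV_shift' (fun n => fst (u n)) 1) in H1 | apply (CV_shift' (fun n => snd (u n)) 1) in H2];
    (eapply Un_cv_ext; [|eassumption]); intro n; simpl; rewrite Nat.add_1_r; reflexivity.
Qed.

Lemma Ccv_scal c u l : Ccv u l -> Ccv (fun n => Cmul c (u n)) (Cmul c l).
Proof.
  intros [H1 H2]; split; simpl.
  - apply (CV_minus (fun n => fst c * fst (u n)) (fun n => snd c * snd (u n)));
      apply CV_mult; auto using Un_cv_const.
  - apply (CV_plus (fun n => fst c * snd (u n)) (fun n => snd c * fst (u n)));
      apply CV_mult; auto using Un_cv_const.
Qed.

Lemma qpoch_succ_shift x q n :
  qpoch x q (S n) = Cmul (Csub C1 x) (qpoch (Cmul (RtoC q) x) q n).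
Proof.
  induction n as [|n IH].
  - cbn [qpoch]; change (RtoC (q ^ 0)) with C1; ring.
  - change (qpoch x q (S (S n))) with (Cmul (qpoch x q (S n)) (Csub C1 (Cmul x (RtoC (q * q ^ n))))).
    rewrite IH; simpl; rewrite RtoC_mul; ring.
Qed.

Section QPochhammer.

Variable q : R.
Hypothesis hq : 0 < q < 1.

Lemma qpoch_Cnorm1_le a n : Cnorm1 (qpoch a q n) <= exp (Cnorm1 a / (1 - q)).
Proof.
  assert (Hpow : forall k, 0 < q ^ k) by (intro; apply pow_lt; lra).
  assert (Hsharp : Cnorm1 (qpoch a q n) <= exp (Cnorm1 a * (1 - q ^ n) / (1 - q))).
  { induction n as [|n IH]; simpl qpoch.
    - replace (Cnorm1 a * (1 - q ^ 0) / (1 - q)) with 0 by (simpl; field; lra).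
      rewrite exp_0; unfold Cnorm1, C1; simpl; rewrite Rabs_R1, Rabs_R0; lra.
    - assert (Hf : Cnorm1 (Csub C1 (Cmul a (RtoC (q ^ n)))) <= 1 + Cnorm1 a * q ^ n).
      { unfold Csub; eapply Rle_trans; [apply Cnorm1_add|]; rewrite Cnorm1_opp.
        pose proof (Cnorm1_mul a (RtoC (q ^ n))) as Hm.
        rewrite Cnorm1_RtoC, Rabs_pos_eq in Hm by (left; apply Hpow).
        unfold Cnorm1 at 1, C1; simpl; rewrite Rabs_R1, Rabs_R0; lra. }
      replace (Cnorm1 a * (1 - q ^ S n) / (1 - q))
        with (Cnorm1 a * (1 - q ^ n) / (1 - q) + Cnorm1 a * q ^ n) by (simpl; field; lra).
      rewrite exp_plus; eapply Rle_trans; [apply Cnorm1_mul|].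
      apply Rmult_le_compat; auto using Cnorm1_ge0.
      eapply Rle_trans; [exact Hf | apply exp_ineq1_le]. }
  eapply Rle_trans; [exact Hsharp|].
  destruct (Rle_lt_or_eq_dec _ _ (Cnorm1_ge0 a)) as [Ha|Ha];
    [|rewrite <- Ha; right; f_equal; field; lra].
  left; apply exp_increasing.
  unfold Rdiv; apply Rmult_lt_compat_r; [apply Rinv_0_lt_compat; lra|].
  specialize (Hpow n); nra.
Qed.

Lemma qpoch_increment_Cnorm1_le a n :
  Cnorm1 (Csub (qpoch a q (S n)) (qpoch a q n)) <= exp (Cnorm1 a / (1 - q)) * Cnorm1 a * q ^ n.
Proof.
  replace (Csub (qpoch a q (S n)) (qpoch a q n))
    with (Copp (Cmul (qpoch a q n) (Cmul a (RtoC (q ^ n))))) by (simpl; ring).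
  rewrite Cnorm1_opp; eapply Rle_trans; [apply Cnorm1_mul|].
  pose proof (Cnorm1_mul a (RtoC (q ^ n))) as Hm.
  rewrite Cnorm1_RtoC, Rabs_pos_eq in Hm by (apply pow_le; lra).
  rewrite Rmult_assoc; apply Rmult_le_compat; auto using Cnorm1_ge0, qpoch_Cnorm1_le.
Qed.

Lemma qpoch_cv a : exists l, Ccv (fun n => qpoch a q n) l.
Proof.
  assert (Hinc : forall (pr : Cx -> R), (forall z w, Rabs (pr z - pr w) <= Cnorm1 (Csub z w)) ->
            exists l, Un_cv (fun n => pr (qpoch a q n)) l).
  { intros pr Hpr.
    apply (Un_cv_of_geometric_increments _ (exp (Cnorm1 a / (1 - q)) * Cnorm1 a) q); [lra|].
    intro n; eapply Rle_trans; [apply Hpr | apply qpoch_increment_Cnorm1_le]. }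
  destruct (Hinc fst (fun z w => Rabs_fst_le_Cnorm1 (Csub z w))) as [l1 H1].
  destruct (Hinc snd (fun z w => Rabs_snd_le_Cnorm1 (Csub z w))) as [l2 H2].
  exists (l1, l2); split; assumption.
Qed.

Lemma qpoch_inf_spec a : Ccv (fun n => qpoch a q n) (qpoch_inf a q).
Proof. unfold qpoch_inf; apply epsilon_spec, qpoch_cv. Qed.

Lemma qpoch_inf_shift x : qpoch_inf x q = Cmul (Csub C1 x) (qpoch_inf (Cmul (RtoC q) x) q).
Proof.
  apply (Ccv_unique (fun n => qpoch x q (S n))).
  - apply Ccv_shift, qpoch_inf_spec.
  - destruct (Ccv_scal (Csub C1 x) _ _ (qpoch_inf_spec (Cmul (RtoC q) x))) as [H1 H2].
    split; (eapply Un_cv_ext; [|eassumption]); intro n; rewrite qpoch_succ_shift; reflexivity.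
Qed.

End QPochhammer.

Lemma Csum_ext f g N : (forall k, (k <= N)%nat -> f k = g k) -> Csum f N = Csum g N.
Proof.
  induction N as [|N IH]; intro E; simpl; [apply E; lia|].
  rewrite IH by (intros; apply E; lia); rewrite E by lia; reflexivity.
Qed.

Lemma Csum_add f g N : Csum (fun k => Cadd (f k) (g k)) N = Cadd (Csum f N) (Csum g N).
Proof. induction N as [|N IH]; simpl; [reflexivity|]; rewrite IH; ring. Qed.

Lemma Csum_sub f g N : Csum (fun k => Csub (f k) (g k)) N = Csub (Csum f N) (Csum g N).
Proof. induction N as [|N IH]; simpl; [reflexivity|]; rewrite IH; ring. Qed.

Lemma Csum_scal c f N : Csum (fun k => Cmul c (f k)) N = Cmul c (Csum f N).
Proof. induction N as [|N IH]; simpl; [reflexivity|]; rewrite IH; ring. Qed.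

Lemma Csum_succ_l f N : Csum f (S N) = Cadd (f O) (Csum (fun k => f (S k)) N).
Proof.
  induction N as [|N IH]; [reflexivity|].
  change (Csum f (S (S N))) with (Cadd (Csum f (S N)) (f (S (S N)))).
  rewrite IH; simpl; ring.
Qed.

Lemma Csum_zero_tail f M N :
  (forall k, (M < k)%nat -> f k = C0) -> (M <= N)%nat -> Csum f N = Csum f M.
Proof. intros Z H; induction H as [|N H IH]; [reflexivity|]; simpl; rewrite IH, Z by lia; ring. Qed.

Definition hcoef (q : R) (m n k : nat) : R :=
  if andb (k <=? m) (k <=? n) then
    qpochR q q m * qpochR q q n * (-1) ^ k * q ^ binom2 k
      / (qpochR q q (m - k) * qpochR q q (n - k) * qpochR q q k)
  else 0.

Definition hterm (q : R) (m n k : nat) (z1 z2 : Cx) : Cx :=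
  Cmul (RtoC (hcoef q m n k)) (Cmul (Cpow z1 (m - k)) (Cpow z2 (n - k))).

Lemma binom2_S k : binom2 (S k) = (binom2 k + k)%nat.
Proof.
  unfold binom2.
  replace (S k * (S k - 1))%nat with (k * (k - 1) + k * 2)%nat by (destruct k; simpl; nia).
  rewrite Nat.div_add by lia; reflexivity.
Qed.

Section Hermite.

Variable q : R.
Hypothesis hq : 0 < q < 1.
Local Notation Q := (qpochR q q).

Lemma one_sub_pow_pos k : 0 < 1 - q * q ^ k.
Proof. pose proof (pow_lt_1_compat q (S k) ltac:(lra) ltac:(lia)); simpl in *; lra. Qed.

Lemma qpochR_pos k : 0 < Q k.
Proof.
  induction k as [|k IH]; simpl; [lra|].
  pose proof (one_sub_pow_pos k); nra.
Qed.

Lemma hcoef_in m n k : (k <= m)%nat -> (k <= n)%nat ->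
  hcoef q m n k = Q m * Q n * (-1) ^ k * q ^ binom2 k / (Q (m - k) * Q (n - k) * Q k).
Proof.
  intros Hm Hn; unfold hcoef.
  rewrite (proj2 (Nat.leb_le _ _) Hm), (proj2 (Nat.leb_le _ _) Hn); reflexivity.
Qed.

Lemma hcoef_out m n k : (m < k \/ n < k)%nat -> hcoef q m n k = 0.
Proof.
  intro H; unfold hcoef.
  destruct (k <=? m) eqn:Em, (k <=? n) eqn:En; try reflexivity.
  apply Nat.leb_le in Em, En; lia.
Qed.

Lemma hcoef_0 m n : hcoef q m n 0 = 1.
Proof.
  rewrite hcoef_in by lia; rewrite !Nat.sub_0_r; simpl.
  pose proof (qpochR_pos m); pose proof (qpochR_pos n); field; lra.
Qed.

Lemma hcoef_succ_interior m n k : (S k <= m)%nat -> (S k <= n)%nat ->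
  hcoef q (S m) n (S k) = hcoef q m n (S k) * q ^ S k + hcoef q m n k * (q ^ n - q ^ k).
Proof.
  intros Hm Hn; rewrite !hcoef_in by lia.
  destruct (Nat.le_exists_sub _ _ Hm) as [r [-> _]], (Nat.le_exists_sub _ _ Hn) as [s [-> _]].
  replace (S (r + S k) - S k)%nat with (S r) by lia.
  replace (r + S k - S k)%nat with r by lia.
  replace (s + S k - S k)%nat with s by lia.
  replace (r + S k - k)%nat with (S r) by lia.
  replace (s + S k - k)%nat with (S s) by lia.
  rewrite binom2_S; cbn [qpochR]; rewrite !pow_add; cbn [pow].
  pose proof (qpochR_pos r); pose proof (qpochR_pos s); pose proof (qpochR_pos k);
  pose proof (qpochR_pos (r + S k)); pose proof (qpochR_pos (s + S k));
  pose proof (one_sub_pow_pos r); pose proof (one_sub_pow_pos s); pose proof (one_sub_pow_pos k).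
  pose proof (one_sub_pow_pos (r + S k)) as Hrk; rewrite pow_add in Hrk; cbn [pow] in Hrk.
  field; repeat split; lra.
Qed.

Lemma hcoef_succ_diag m n : (m < n)%nat ->
  hcoef q (S m) n (S m) = hcoef q m n m * (q ^ n - q ^ m).
Proof.
  intro Hmn; rewrite !hcoef_in by lia.
  destruct (Nat.le_exists_sub _ _ Hmn) as [s [-> _]].
  rewrite !Nat.sub_diag.
  replace (s + S m - S m)%nat with s by lia.
  replace (s + S m - m)%nat with (S s) by lia.
  rewrite binom2_S; cbn [qpochR]; rewrite !pow_add; cbn [pow].
  pose proof (qpochR_pos m); pose proof (qpochR_pos s); pose proof (qpochR_pos (s + S m));
  pose proof (one_sub_pow_pos s); pose proof (one_sub_pow_pos m).
  field; repeat split; lra.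
Qed.

(* The zero padding of [hcoef] makes this q-Pascal rule hold for every [k]. *)
Lemma hcoef_succ_left m n k :
  hcoef q (S m) n (S k) = hcoef q m n (S k) * q ^ S k + hcoef q m n k * (q ^ n - q ^ k).
Proof.
  destruct (Nat.le_gt_cases (S k) n) as [Hn|Hn].
  - destruct (Nat.le_gt_cases (S k) m) as [Hm|Hm]; [exact (hcoef_succ_interior m n k Hm Hn)|].
    rewrite (hcoef_out m n (S k)) by lia.
    destruct (Nat.eq_dec k m) as [->|Hkm].
    + rewrite hcoef_succ_diag by lia; ring.
    + rewrite !hcoef_out by lia; ring.
  - rewrite (hcoef_out (S m) n (S k)), (hcoef_out m n (S k)) by lia.
    destruct (Nat.eq_dec k n) as [->|Hkn]; [ring|].
    rewrite hcoef_out by lia; ring.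
Qed.

Lemma hterm_succ_left m n k z1 z2 :
  Cmul z2 (hterm q (S m) n (S k) z1 z2) =
  Cadd (Cmul (RtoC (q ^ n - q ^ k)) (hterm q m n k z1 z2))
       (Cmul (RtoC (q ^ S k)) (Cmul (Cmul z1 z2) (hterm q m n (S k) z1 z2))).
Proof.
  unfold hterm; rewrite hcoef_succ_left; cbn [Nat.sub].
  destruct (Nat.le_gt_cases (S k) n) as [Hn|Hn].
  - replace (n - k)%nat with (S (n - S k)) by lia.
    rewrite RtoC_add, !RtoC_mul.
    destruct (Nat.le_gt_cases (S k) m) as [Hm|Hm].
    + replace (m - k)%nat with (S (m - S k)) by lia; simpl; ring.
    + rewrite (hcoef_out m n (S k)), RtoC_0 by lia; simpl; ring.
  - assert (Hk : hcoef q m n k * (q ^ n - q ^ k) = 0).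
    { destruct (Nat.eq_dec k n) as [->|Hkn]; [ring|rewrite hcoef_out by lia; ring]. }
    rewrite (hcoef_out m n (S k)), Rmult_0_l, Rplus_0_l, Hk, !RtoC_0 by lia.
    replace (Cmul (RtoC (q ^ n - q ^ k))
                  (Cmul (RtoC (hcoef q m n k)) (Cmul (Cpow z1 (m - k)) (Cpow z2 (n - k)))))
      with (Cmul (RtoC (hcoef q m n k * (q ^ n - q ^ k))) (Cmul (Cpow z1 (m - k)) (Cpow z2 (n - k))))
      by (rewrite RtoC_mul; ring).
    rewrite Hk, RtoC_0; ring.
Qed.

Lemma hterm_scale2 m n k z1 z2 : (k <= n)%nat ->
  Cmul (RtoC (q ^ n)) (hterm q m n k z1 (Cmul (RtoC (1 / q)) z2)) =
  Cmul (RtoC (q ^ k)) (hterm q m n k z1 z2).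
Proof.
  intro Hk.
  assert (E : q ^ n * (1 / q) ^ (n - k) = q ^ k).
  { replace n with (k + (n - k))%nat at 1 by lia.
    rewrite pow_add, Rmult_assoc, <- Rpow_mult_distr.
    replace (q * (1 / q)) with 1 by (field; lra); rewrite pow1; ring. }
  unfold hterm; rewrite Cpow_mul, Cpow_RtoC, <- E, RtoC_mul; ring.
Qed.

Lemma H2_as_sum m n z1 z2 N : (Nat.min m n <= N)%nat ->
  H2 m n z1 z2 q = Csum (fun k => hterm q m n k z1 z2) N.
Proof.
  intro HN; rewrite (Csum_zero_tail _ (Nat.min m n) N) by
    (try exact HN; intros k Hk; unfold hterm; rewrite hcoef_out, RtoC_0 by lia; ring).
  unfold H2; apply Csum_ext; intros k Hk; unfold hterm.
  rewrite hcoef_in by lia; unfold qbinom.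
  pose proof (qpochR_pos k); pose proof (qpochR_pos (m - k)); pose proof (qpochR_pos (n - k));
  pose proof (qpochR_pos m); pose proof (qpochR_pos n).
  do 2 f_equal; field; repeat split; lra.
Qed.

Lemma H2_succ_left m n z1 z2 :
  Cmul z2 (H2 (S m) n z1 z2 q) =
  Cmul (RtoC (q ^ n))
    (Csub (H2 m n z1 z2 q) (Cmul (Csub C1 (Cmul z1 z2)) (H2 m n z1 (Cmul (RtoC (1 / q)) z2) q))).
Proof.
  rewrite (H2_as_sum (S m) n z1 z2 (S n)), !(H2_as_sum m n _ _ n) by lia.
  set (U := fun k => Cmul (RtoC (q ^ n - q ^ k)) (hterm q m n k z1 z2)).
  set (V := fun k => Cmul (RtoC (q ^ k)) (Cmul (Cmul z1 z2) (hterm q m n k z1 z2))).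
  (* Both sides equal [sum U + sum V]; on the left, [z2 * hterm (S m) n (S k)]
     splits as [U k + V (S k)]. *)
  transitivity (Cadd (Csum U n) (Csum V n)).
  - rewrite <- Csum_scal, Csum_succ_l.
    rewrite (Csum_ext _ (fun k => Cadd (U k) (V (S k)))) by (intros; apply hterm_succ_left).
    assert (E0 : Cmul z2 (hterm q (S m) n 0 z1 z2) = V O).
    { unfold V, hterm; rewrite !hcoef_0, !Nat.sub_0_r; simpl; rewrite RtoC_1; ring. }
    assert (En : V (S n) = C0).
    { unfold V, hterm; rewrite hcoef_out, RtoC_0 by lia; ring. }
    rewrite E0, Csum_add.
    replace (Csum V n) with (Csum V (S n)) by (simpl; rewrite En; ring).
    rewrite Csum_succ_l; ring.
  - rewrite <- !Csum_scal, <- Csum_sub, <- Csum_scal, <- Csum_add.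
    apply Csum_ext; intros k Hk.
    assert (Hs := hterm_scale2 m n k z1 z2 Hk).
    unfold U, V; rewrite RtoC_sub.
    transitivity (Csub (Cmul (RtoC (q ^ n)) (hterm q m n k z1 z2))
      (Cmul (Csub C1 (Cmul z1 z2)) (Cmul (RtoC (q ^ n)) (hterm q m n k z1 (Cmul (RtoC (1 / q)) z2)))));
      [rewrite Hs; ring | ring].
Qed.

End Hermite.

Lemma H2_sym m n z1 z2 q : H2 m n z1 z2 q = H2 n m z2 z1 q.
Proof.
  unfold H2; rewrite Nat.min_comm; apply Csum_ext; intros.
  f_equal; [f_equal; ring | ring].
Qed.

Lemma H2_0_0 z1 z2 q : H2 0 0 z1 z2 q = C1.
Proof.
  unfold H2, qbinom; simpl.
  replace (1 / (1 * 1) * (1 / (1 * 1)) * 1 * 1 * 1) with 1 by field.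
  rewrite RtoC_1; ring.
Qed.

Lemma Wq_comm q z1 z2 : Wq q z1 z2 = Wq q z2 z1.
Proof. unfold Wq; f_equal; ring. Qed.

Lemma Dq_local p f g z :
  f z = g z -> f (Cmul (RtoC p) z) = g (Cmul (RtoC p) z) -> Dq p f z = Dq p g z.
Proof. intros E1 E2; unfold Dq; rewrite E1, E2; reflexivity. Qed.

Lemma Dq1_scal p c F z1 z2 :
  Dq1 p (fun w1 w2 => Cmul c (F w1 w2)) z1 z2 = Cmul c (Dq1 p F z1 z2).
Proof. unfold Dq1, Dq, Cdiv; ring. Qed.

Lemma Dq2_scal p c F z1 z2 :
  Dq2 p (fun w1 w2 => Cmul c (F w1 w2)) z1 z2 = Cmul c (Dq2 p F z1 z2).
Proof. unfold Dq2, Dq, Cdiv; ring. Qed.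

Definition rodrigues_factor (q : R) (m n : nat) : R := (1 - 1 / q) ^ (m + n) * q ^ (m * n).

Section Rodrigues.

Variable q : R.
Hypothesis hq : 0 < q < 1.

Lemma one_sub_inv_neq0 : 1 - 1 / q <> 0.
Proof.
  intro H; apply (Rmult_eq_compat_l q) in H.
  replace (q * (1 - 1 / q)) with (q - 1) in H by (field; lra); lra.
Qed.

Lemma raising_factor_neq0 k : q ^ k * (1 - 1 / q) <> 0.
Proof.
  apply Rmult_integral_contrapositive; split; [apply pow_nonzero; lra | exact one_sub_inv_neq0].
Qed.

Lemma RtoC_q_mul_inv : Cmul (RtoC q) (RtoC (1 / q)) = C1.
Proof. rewrite <- RtoC_mul, <- RtoC_1; f_equal; field; lra. Qed.

Lemma scale_inv_neq0 z : z <> C0 -> Cmul (RtoC (1 / q)) z <> C0.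
Proof.
  intros hz E; apply hz.
  transitivity (Cmul (Cmul (RtoC q) (RtoC (1 / q))) z); [rewrite RtoC_q_mul_inv; ring|].
  replace (Cmul (Cmul (RtoC q) (RtoC (1 / q))) z) with (Cmul (RtoC q) (Cmul (RtoC (1 / q)) z)) by ring.
  rewrite E; ring.
Qed.

Lemma Wq_scale2 z1 z2 :
  Wq q z1 (Cmul (RtoC (1 / q)) z2) = Cmul (Csub C1 (Cmul z1 z2)) (Wq q z1 z2).
Proof.
  unfold Wq.
  replace (Cmul (RtoC q) (Cmul z1 (Cmul (RtoC (1 / q)) z2)))
    with (Cmul (Cmul (RtoC q) (RtoC (1 / q))) (Cmul z1 z2)) by ring.
  rewrite RtoC_q_mul_inv; replace (Cmul C1 (Cmul z1 z2)) with (Cmul z1 z2) by ring.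
  apply qpoch_inf_shift, hq.
Qed.

Lemma Dq2_weight F z1 z2 :
  Dq2 (1 / q) (fun w1 w2 => Cmul (Wq q w1 w2) (F w1 w2)) z1 z2 =
  Cmul (Wq q z1 z2)
    (Cdiv (Csub (F z1 z2) (Cmul (Csub C1 (Cmul z1 z2)) (F z1 (Cmul (RtoC (1 / q)) z2))))
          (Cmul (RtoC (1 - 1 / q)) z2)).
Proof. unfold Dq2, Dq; rewrite Wq_scale2; unfold Cdiv; ring. Qed.

Lemma Dq2_weight_H2 m n z1 z2 : z2 <> C0 ->
  Dq2 (1 / q) (fun w1 w2 => Cmul (Wq q w1 w2) (H2 m n w1 w2 q)) z1 z2 =
  Cmul (RtoC (/ (q ^ n * (1 - 1 / q)))) (Cmul (Wq q z1 z2) (H2 (S m) n z1 z2 q)).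
Proof.
  intro hz2.
  assert (Hqn : RtoC (q ^ n) <> C0) by (apply RtoC_neq0, pow_nonzero; lra).
  assert (Hc : RtoC (1 - 1 / q) <> C0) by exact (RtoC_neq0 _ one_sub_inv_neq0).
  rewrite Dq2_weight.
  replace (Csub (H2 m n z1 z2 q)
                (Cmul (Csub C1 (Cmul z1 z2)) (H2 m n z1 (Cmul (RtoC (1 / q)) z2) q)))
    with (Cdiv (Cmul z2 (H2 (S m) n z1 z2 q)) (RtoC (q ^ n)))
    by (rewrite H2_succ_left by exact hq; field; exact Hqn).
  rewrite RtoC_inv, RtoC_mul by apply raising_factor_neq0.
  field; auto.
Qed.

Lemma Dq1_weight_H2 m n z1 z2 : z1 <> C0 ->
  Dq1 (1 / q) (fun w1 w2 => Cmul (Wq q w1 w2) (H2 m n w1 w2 q)) z1 z2 =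
  Cmul (RtoC (/ (q ^ m * (1 - 1 / q)))) (Cmul (Wq q z1 z2) (H2 m (S n) z1 z2 q)).
Proof.
  intro hz1.
  (* [Dq1 p F z1 z2] is convertible to [Dq2 p (fun w1 w2 => F w2 w1) z2 z1]. *)
  transitivity (Dq2 (1 / q) (fun w1 w2 => Cmul (Wq q w1 w2) (H2 n m w1 w2 q)) z2 z1).
  - apply Dq_local; rewrite Wq_comm, H2_sym; reflexivity.
  - rewrite Dq2_weight_H2 by exact hz1; rewrite Wq_comm, H2_sym; reflexivity.
Qed.

Lemma rodrigues_factor_neq0 m n : rodrigues_factor q m n <> 0.
Proof.
  apply Rmult_integral_contrapositive; split; apply pow_nonzero; [exact one_sub_inv_neq0 | lra].
Qed.

Lemma rodrigues_factor_succ_l m n :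
  rodrigues_factor q (S m) n = rodrigues_factor q m n * (q ^ n * (1 - 1 / q)).
Proof.
  unfold rodrigues_factor; rewrite Nat.add_succ_l, Nat.mul_succ_l; simpl; rewrite !pow_add; ring.
Qed.

Lemma rodrigues_factor_succ_r m n :
  rodrigues_factor q m (S n) = rodrigues_factor q m n * (q ^ m * (1 - 1 / q)).
Proof.
  unfold rodrigues_factor; rewrite Nat.add_succ_r, Nat.mul_succ_r, pow_add; simpl; ring.
Qed.

Lemma iter_Dq1_weight n z1 z2 : z1 <> C0 -> z2 <> C0 ->
  Nat.iter n (Dq1 (1 / q)) (Wq q) z1 z2 =
  Cmul (RtoC (/ rodrigues_factor q 0 n)) (Cmul (Wq q z1 z2) (H2 0 n z1 z2 q)).
Proof.
  revert z1 z2; induction n as [|n IH]; intros z1 z2 hz1 hz2.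
  - unfold rodrigues_factor; simpl; rewrite H2_0_0, Rmult_1_r, Rinv_1, RtoC_1; ring.
  - transitivity (Dq1 (1 / q) (fun w1 w2 => Cmul (RtoC (/ rodrigues_factor q 0 n))
                    (Cmul (Wq q w1 w2) (H2 0 n w1 w2 q))) z1 z2).
    + apply Dq_local; apply IH; auto using scale_inv_neq0.
    + rewrite Dq1_scal, Dq1_weight_H2 by exact hz1.
      rewrite rodrigues_factor_succ_r, !Rinv_mult, !RtoC_mul; ring.
Qed.

Lemma iter_Dq2_iter_Dq1_weight m n z1 z2 : z1 <> C0 -> z2 <> C0 ->
  Nat.iter m (Dq2 (1 / q)) (Nat.iter n (Dq1 (1 / q)) (Wq q)) z1 z2 =
  Cmul (RtoC (/ rodrigues_factor q m n)) (Cmul (Wq q z1 z2) (H2 m n z1 z2 q)).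
Proof.
  revert z1 z2; induction m as [|m IH]; intros z1 z2 hz1 hz2; [exact (iter_Dq1_weight n z1 z2 hz1 hz2)|].
  transitivity (Dq2 (1 / q) (fun w1 w2 => Cmul (RtoC (/ rodrigues_factor q m n))
                  (Cmul (Wq q w1 w2) (H2 m n w1 w2 q))) z1 z2).
  - apply Dq_local; apply IH; auto using scale_inv_neq0.
  - rewrite Dq2_scal, Dq2_weight_H2 by exact hz2.
    rewrite rodrigues_factor_succ_l, !Rinv_mult, !RtoC_mul; ring.
Qed.

End Rodrigues.

Theorem theorem3p2 (q : R) (hq0 : 0 < q) (hq1 : q < 1) (m n : nat) (z1 z2 : Cx)
  (hz1 : z1 <> C0) (hz2 : z2 <> C0) (hW : Wq q z1 z2 <> C0) :
  H2 m n z1 z2 q =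
    Cmul (RtoC ((1 - 1 / q) ^ (m + n) * q ^ (m * n)))
      (Cdiv (Nat.iter m (Dq2 (1 / q)) (Nat.iter n (Dq1 (1 / q)) (Wq q)) z1 z2)
            (Wq q z1 z2))
  /\
  H2 (S m) n z1 z2 q =
    Cmul (RtoC (q ^ n * (1 - 1 / q)))
      (Cdiv (Dq2 (1 / q) (fun w1 w2 => Cmul (Wq q w1 w2) (H2 m n w1 w2 q)) z1 z2)
            (Wq q z1 z2))
  /\
  H2 m (S n) z1 z2 q =
    Cmul (RtoC (q ^ m * (1 - 1 / q)))
      (Cdiv (Dq1 (1 / q) (fun w1 w2 => Cmul (Wq q w1 w2) (H2 m n w1 w2 q)) z1 z2)
            (Wq q z1 z2)).
Proof.
  assert (hq : 0 < q < 1) by lra.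
  split; [|split].
  - rewrite (iter_Dq2_iter_Dq1_weight q hq) by assumption.
    fold (rodrigues_factor q m n).
    rewrite RtoC_inv by exact (rodrigues_factor_neq0 q hq m n).
    field; auto using RtoC_neq0, rodrigues_factor_neq0.
  - rewrite (Dq2_weight_H2 q hq) by assumption.
    rewrite RtoC_inv by exact (raising_factor_neq0 q hq n).
    field; auto using RtoC_neq0, raising_factor_neq0.
  - rewrite (Dq1_weight_H2 q hq) by assumption.
    rewrite RtoC_inv by exact (raising_factor_neq0 q hq m).
    field; auto using RtoC_neq0, raising_factor_neq0.
Qed.
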